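(* Let $a\in C^1([0,T]\times[-\pi,\pi])$ solve $$\partial_t a+\Big(\int_{-\pi}^x a(t,\bar x)\,d\bar x\Big)\partial_x a-a^2+\frac1\pi\int_{-\pi}^{\pi}a^2\,dx=0,\qquad \int_{-\pi}^\pi a(t,x)dx=0,$$ and set $a_0=a(0,\cdot)$. Assume $\partial_x a_0(x_0^* )=0$ at some point $x_0^*$. Then for all $t\in[0,T]$, $\partial_x a(t,x^*(t))=0$, where $x^*$ is the characteristic starting from $x_0^*$.
   Context: The characteristic starting from $x_0^*$ is the solution of $\frac{d}{dt}x^*(t)=\int_{-\pi}^{x^*(t)}a(t,x)\,dx$, $x^*(0)=x_0^*$. *)

From Stdlib Require Import Reals.
From Coquelicot Require Import Coquelicot.
Open Scope R_scope.

Definition rect (T : R) (p : R * R) : Prop :=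
  0 <= fst p <= T /\ - PI <= snd p <= PI.

Definition cont_on_rect (T : R) (f : R -> R -> R) : Prop :=
  forall p : R * R, rect T p ->
    filterlim (fun q : R * R => f (fst q) (snd q))
      (within (rect T) (locally p)) (locally (f (fst p) (snd p))).

Definition C1_rect (T : R) (a at_ ax : R -> R -> R) : Prop :=
  (forall t x, 0 < t < T -> - PI < x < PI ->
     is_derive (fun s => a s x) t (at_ t x) /\
     is_derive (fun y => a t y) x (ax t x)) /\
  cont_on_rect T a /\ cont_on_rect T at_ /\ cont_on_rect T ax.

Definition characteristic (T : R) (a : R -> R -> R) (x0 : R) (xs : R -> R) : Prop :=
  xs 0 = x0 /\
  (forall t, 0 <= t <= T -> - PI <= xs t <= PI) /\
  (forall t, 0 <= t <= T ->
     filterlim xs (within (fun s => 0 <= s <= T) (locally t)) (locally (xs t))) /\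
  (forall t, 0 < t < T ->
     is_derive xs t (RInt (fun x => a t x) (- PI) (xs t))).

(** Differentiating the equation in [x] would give [d/dt a_x(t, x*(t)) = a a_x] along the
    characteristic, but [a] is only C^1.  Instead compare [a] along the characteristic [X]
    with [a] along the nearby curve [Y = X + h J], where [J' = a(t, X) J] and [J(0) = 1].
    Then [Y' - A(t, Y) = o(h)] with [A(t, y) = int_{-pi}^y a(t, x) dx], and the equation
    turns this into [G' = (a(t, Y) + a(t, X)) G + o(h)] for [G = a(t, Y) - a(t, X)].
    Since [a_x(0, x0) = 0], [G(0) = o(h)], so Gronwall gives [G(t) = o(h)]; but
    [G(t) = a_x(t, X t) h J(t) + o(h)] with [J] bounded below.  The sign of [h] is chosen so
    that [Y] stays in [[-pi, pi]]: by the zero-mean condition [A] vanishes at both ends, so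
    [X] keeps a positive distance from the end it does not start at. *)

From Stdlib Require Import Reals Lra Lia.
From Coquelicot Require Import Coquelicot.
Open Scope R_scope.
Set Bullet Behavior "Strict Subproofs".

Definition clamp (lo hi x : R) : R := Rmax lo (Rmin hi x).

Lemma clamp_id lo hi x : lo <= x <= hi -> clamp lo hi x = x.
Proof. unfold clamp, Rmax, Rmin; repeat destruct Rle_dec; lra. Qed.

Lemma clamp_in lo hi x : lo <= hi -> lo <= clamp lo hi x <= hi.
Proof. unfold clamp, Rmax, Rmin; repeat destruct Rle_dec; lra. Qed.

Lemma clamp_lipschitz lo hi x y : Rabs (clamp lo hi x - clamp lo hi y) <= Rabs (x - y).
Proof.
  unfold clamp, Rmax, Rmin, Rabs; repeat destruct Rle_dec; repeat destruct Rcase_abs; lra.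
Qed.

Lemma Rmin_Rmax_in lo hi y y' : lo <= y <= hi -> lo <= y' <= hi ->
  lo <= Rmin y y' /\ Rmax y y' <= hi.
Proof. unfold Rmin, Rmax; destruct Rle_dec; lra. Qed.

Lemma Rabs_between_le y y' c : Rmin y y' <= c <= Rmax y y' -> Rabs (c - y) <= Rabs (y' - y).
Proof. unfold Rmin, Rmax, Rabs; destruct Rle_dec; repeat destruct Rcase_abs; lra. Qed.

Lemma locally_open_interval lo hi x : lo < x < hi -> locally x (fun y => lo < y < hi).
Proof. intros Hx. exact (open_and _ _ (open_gt lo) (open_lt hi) x Hx). Qed.

Lemma is_derive_increment (f : R -> R) x l :
  is_derive f x l <->
  forall eps : posreal,
    locally x (fun y => Rabs (f y - f x - (y - x) * l) <= eps * Rabs (y - x)).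
Proof.
  split.
  - intros [_ Hd] eps. exact (Hd x (fun P H => H) eps).
  - intros Hd. split; [apply is_linear_scal_l|].
    intros x' Hx'. replace x' with x; [exact Hd|].
    exact (@is_filter_lim_locally_unique R_AbsRing R_NormedModule x x' Hx').
Qed.

Lemma continuity_pt_comp_2d (g : R -> R -> R) (u v : R -> R) s :
  continuity_2d_pt g (u s) (v s) -> continuity_pt u s -> continuity_pt v s ->
  continuity_pt (fun r => g (u r) (v r)) s.
Proof.
  intros Hg Hu Hv. apply continuity_pt_locally. intros eps.
  destruct (Hg eps) as [d Hd].
  apply continuity_pt_locally with (eps := d) in Hu, Hv.
  apply (filter_imp _ _ (fun r Hr => Hd _ _ (proj1 Hr) (proj2 Hr)) (filter_and _ _ Hu Hv)).
Qed.

Lemma continuity_pt_slice_l (g : R -> R -> R) t x :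
  continuity_2d_pt g t x -> continuity_pt (fun s => g s x) t.
Proof.
  intros Hg. apply (continuity_pt_comp_2d g id (fun _ => x)); auto.
  - apply continuity_pt_id.
  - apply continuity_pt_const. intros ? ?; reflexivity.
Qed.

Lemma continuity_pt_slice_r (g : R -> R -> R) t x :
  continuity_2d_pt g t x -> continuity_pt (fun y => g t y) x.
Proof.
  intros Hg. apply (continuity_pt_comp_2d g (fun _ => t) id); auto.
  - apply continuity_pt_const. intros ? ?; reflexivity.
  - apply continuity_pt_id.
Qed.

Lemma continuity_pt_clamp_comp (f : R -> R) lo hi s : lo <= hi ->
  (forall t, lo <= t <= hi ->
     filterlim f (within (fun r => lo <= r <= hi) (locally t)) (locally (f t))) ->
  continuity_pt (fun r => f (clamp lo hi r)) s.
Proof.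
  intros Hlh Hf. apply continuity_pt_locally. intros eps.
  destruct (proj1 (filterlim_locally _ _) (Hf _ (clamp_in lo hi s Hlh)) eps) as [d Hd].
  exists d. intros r Hr. apply Hd.
  - apply (Rle_lt_trans _ _ _ (clamp_lipschitz lo hi r s) Hr).
  - apply clamp_in; exact Hlh.
Qed.

Lemma le_closure_interval (phi : R -> R) lo hi z c : lo < hi -> lo <= z <= hi ->
  continuity_pt phi z -> (forall y, lo < y < hi -> phi y <= c) -> phi z <= c.
Proof.
  intros Hlh Hz Hc Hin. apply Rle_plus_epsilon. intros e He.
  destruct (proj1 (continuity_pt_locally phi z) Hc (mkposreal e He)) as [d Hd].
  set (r := Rmin (d / 2) ((hi - lo) / 4)).
  assert (Hr : 0 < r) by (apply Rmin_pos; [apply Rdiv_lt_0_compat; [apply cond_pos|] |]; lra).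
  assert (Hrd : r < d).
  { pose proof (Rmin_l (d / 2) ((hi - lo) / 4)). pose proof (cond_pos d). unfold r in *. lra. }
  assert (Hrh : r <= (hi - lo) / 4) by apply Rmin_r.
  assert (Hy : exists y, Rabs (y - z) < d /\ lo < y < hi).
  { destruct (Rle_dec z ((lo + hi) / 2)).
    - exists (z + r). rewrite Rabs_pos_eq by lra. split; lra.
    - exists (z - r). rewrite Rabs_left by lra. split; lra. }
  destruct Hy as [y [Hyz Hy]].
  specialize (Hd y Hyz). specialize (Hin y Hy). simpl in Hd.
  apply Rabs_lt_between in Hd. lra.
Qed.

Lemma mvt_remainder_le (f df : R -> R) y y' eps :
  (forall c, Rmin y y' < c < Rmax y y' -> is_derive f c (df c)) ->
  (forall c, Rmin y y' <= c <= Rmax y y' -> continuity_pt f c) ->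
  (forall c, Rmin y y' <= c <= Rmax y y' -> Rabs (df c - df y) <= eps) ->
  Rabs (f y' - f y - (y' - y) * df y) <= eps * Rabs (y' - y).
Proof.
  intros Hd Hc Hb. destruct (MVT_gen f y y' df Hd Hc) as [c [Hcyy Hmvt]].
  rewrite Hmvt.
  replace (df c * (y' - y) - (y' - y) * df y) with ((df c - df y) * (y' - y)) by ring.
  rewrite Rabs_mult. apply Rmult_le_compat_r; [apply Rabs_pos | apply Hb; exact Hcyy].
Qed.

Lemma abs_RInt_le_const_abs (f : R -> R) u v M : ex_RInt f u v ->
  (forall z, Rmin u v <= z <= Rmax u v -> Rabs (f z) <= M) ->
  Rabs (RInt f u v) <= Rabs (v - u) * M.
Proof.
  intros Hex Hb. destruct (Rle_dec u v).
  - rewrite (Rabs_pos_eq (v - u)) by lra. apply abs_RInt_le_const; auto.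
    intros z Hz. apply Hb. rewrite Rmin_left, Rmax_right; lra.
  - rewrite <- (opp_RInt_swap f v u) by (apply ex_RInt_swap; auto).
    change (Rabs (- RInt f v u) <= Rabs (v - u) * M). rewrite Rabs_Ropp.
    rewrite (Rabs_left (v - u)) by lra. replace (- (v - u)) with (u - v) by ring.
    apply abs_RInt_le_const; [lra | apply ex_RInt_swap; auto |].
    intros z Hz. apply Hb. rewrite Rmin_right, Rmax_left; lra.
Qed.

Lemma increment_le_of_derive_le (f df : R -> R) u v C : u <= v ->
  (forall r, u < r < v -> is_derive f r (df r)) ->
  (forall r, u <= r <= v -> continuity_pt f r) ->
  (forall r, u < r < v -> df r <= C) ->
  f v - f u <= C * (v - u).
Proof.
  intros Huv Hd Hc Hb. destruct (Req_dec u v) as [<-|Hne].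
  { rewrite !Rminus_diag; lra. }
  set (pr1 := fun c (P : u < c < v) => exist (fun l => derivable_pt_abs f c l) (df c)
                (proj1 (is_derive_Reals _ _ _) (Hd c P))).
  set (pr2 := fun c (_ : u < c < v) => derivable_pt_id c).
  destruct (MVT f id u v pr1 pr2 ltac:(lra) Hc
              (fun c _ => derivable_continuous_pt _ _ (derivable_pt_id c))) as [c [P Hmvt]].
  unfold pr1, pr2 in Hmvt. simpl in Hmvt. rewrite derive_pt_id in Hmvt. unfold id in Hmvt.
  specialize (Hb c P). nra.
Qed.

Lemma exp_le_compat x y : x <= y -> exp x <= exp y.
Proof. intros [H|H]; [left; apply exp_increasing; exact H | rewrite H; lra]. Qed.

Lemma is_derive_exp_scal K r : is_derive (fun y => exp (K * y)) r (K * exp (K * r)).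
Proof. auto_derive; [exact I | ring]. Qed.

Lemma continuity_pt_of_is_derive (f : R -> R) x l : is_derive f x l -> continuity_pt f x.
Proof. intros H. apply derivable_continuous_pt. exists l. apply is_derive_Reals, H. Qed.

Lemma exp_lower_bound_of_derive (P dP : R -> R) K s : 0 <= s ->
  (forall r, 0 < r < s -> is_derive P r (dP r)) ->
  (forall r, 0 <= r <= s -> continuity_pt P r) ->
  (forall r, 0 < r < s -> - K * P r <= dP r) ->
  P 0 * exp (- (K * s)) <= P s.
Proof.
  intros Hs Hd Hc Hb.
  assert (Hmono := increment_le_of_derive_le (fun r => - (P r * exp (K * r)))
     (fun r => - (dP r * exp (K * r) + P r * (K * exp (K * r)))) 0 s 0 Hs).
  simpl in Hmono. rewrite Rmult_0_r, exp_0, Rmult_1_r, Rmult_0_l in Hmono.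
  assert (HPs : P 0 <= P s * exp (K * s)).
  { enough (- (P s * exp (K * s)) - - P 0 <= 0) by lra. apply Hmono.
    - intros r Hr. apply (@is_derive_opp R_AbsRing R_NormedModule (fun y => P y * exp (K * y))).
      apply (is_derive_mult P (fun y => exp (K * y)));
        [apply Hd; exact Hr | apply is_derive_exp_scal |].
      intros; apply Rmult_comm.
    - intros r Hr. apply continuity_pt_opp, continuity_pt_mult; [apply Hc; exact Hr |].
      exact (continuity_pt_of_is_derive _ _ _ (is_derive_exp_scal _ r)).
    - intros r Hr. specialize (Hb r Hr). pose proof (exp_pos (K * r)).
      assert (0 <= (dP r + K * P r) * exp (K * r)) by (apply Rmult_le_pos; lra). nra. }
  replace (P s) with (P s * exp (K * s) * exp (- (K * s))).
  - apply Rmult_le_compat_r; [left; apply exp_pos | exact HPs].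
  - rewrite Rmult_assoc, <- exp_plus. replace (K * s + - (K * s)) with 0 by ring.
    rewrite exp_0; ring.
Qed.

Lemma gronwall_integrand_le g b e B D : Rabs b <= B -> Rabs e <= D ->
  2 * g * (b * g + e) - (2 * B + 1) * g ^ 2 <= D ^ 2.
Proof.
  intros Hb He. apply Rabs_le_between in Hb. apply Rabs_le_between in He.
  assert (Hbg : b * g ^ 2 <= B * g ^ 2) by (apply Rmult_le_compat_r; [apply pow2_ge_0 | lra]).
  assert (He2 : e ^ 2 <= D ^ 2).
  { assert (0 <= (D - e) * (D + e)) by (apply Rmult_le_pos; lra). nra. }
  pose proof (pow2_ge_0 (g - e)). nra.
Qed.

Lemma gronwall_sq (G b E : R -> R) B D s : 0 <= s -> 0 <= B ->
  (forall r, 0 < r < s -> is_derive G r (b r * G r + E r)) ->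
  (forall r, 0 <= r <= s -> continuity_pt G r) ->
  (forall r, 0 < r < s -> Rabs (b r) <= B) ->
  (forall r, 0 < r < s -> Rabs (E r) <= D) ->
  G s ^ 2 <= (G 0 ^ 2 + D ^ 2 * s) * exp ((2 * B + 1) * s).
Proof.
  intros Hs HB Hd Hc Hb HE. set (L := 2 * B + 1).
  assert (Hdecay : G s ^ 2 * exp (- L * s) - G 0 ^ 2 * exp (- L * 0) <= D ^ 2 * (s - 0)).
  { apply (increment_le_of_derive_le (fun r => G r ^ 2 * exp (- L * r))
      (fun r => (2 * G r * (b r * G r + E r) - L * G r ^ 2) * exp (- L * r))); [exact Hs | | |].
    - intros r Hr.
      assert (HG2 := is_derive_pow G 2 r _ (Hd r Hr)).
      assert (H := is_derive_mult _ _ r _ _ HG2 (is_derive_exp_scal (- L) r)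
                     (fun _ _ => Rmult_comm _ _)).
      simpl in H. replace ((2 * G r * (b r * G r + E r) - L * G r ^ 2) * exp (- L * r))
        with ((1 + 1) * (b r * G r + E r) * (G r * 1) * exp (- L * r)
              + G r * (G r * 1) * (- L * exp (- L * r))) by ring.
      exact H.
    - intros r Hr. apply continuity_pt_mult.
      + apply (continuity_pt_comp G (fun y => y ^ 2));
          [apply Hc, Hr | apply derivable_continuous_pt, derivable_pt_pow].
      + exact (continuity_pt_of_is_derive _ _ _ (is_derive_exp_scal _ r)).
    - intros r Hr.
      assert (He1 : exp (- L * r) <= 1) by (rewrite <- exp_0; apply exp_le_compat; unfold L; nra).
      pose proof (exp_pos (- L * r)).
      pose proof (gronwall_integrand_le (G r) (b r) (E r) B D (Hb r Hr) (HE r Hr)).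
      apply Rle_trans with (D ^ 2 * exp (- L * r));
        [apply Rmult_le_compat_r; [lra | unfold L; lra]|].
      pose proof (pow2_ge_0 D). nra. }
  rewrite Rmult_0_r, exp_0 in Hdecay.
  replace (G s ^ 2) with (G s ^ 2 * exp (- L * s) * exp (L * s)).
  - apply Rmult_le_compat_r; [left; apply exp_pos | lra].
  - rewrite Rmult_assoc, <- exp_plus. replace (- L * s + L * s) with 0 by ring.
    rewrite exp_0; ring.
Qed.

Lemma abs_le_sqrt_of_sqr_le g c C : 0 <= c -> g ^ 2 <= c ^ 2 * C -> Rabs g <= c * sqrt C.
Proof.
  intros Hc Hg.
  rewrite <- (sqrt_pow2 c), <- sqrt_mult_alt, <- (sqrt_pow2 (Rabs g)) by
    (apply Rabs_pos || apply pow2_ge_0 || exact Hc).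
  apply sqrt_le_1_alt. rewrite pow2_abs. exact Hg.
Qed.

Lemma abs_le_of_linear_approx g u v eps eta S l L : 0 < eta -> 0 < l -> 0 <= eps ->
  eta * l <= Rabs u <= eta * L -> Rabs (g - u * v) <= eps * Rabs u ->
  Rabs g <= eps * eta * S -> Rabs v <= eps * ((S + L) / l).
Proof.
  intros Heta Hl Heps [Hul HuL] Happrox Hg.
  assert (Huv : Rabs u * Rabs v <= eps * eta * (S + L)).
  { rewrite <- Rabs_mult.
    assert (Htri := Rabs_triang g (- (g - u * v))). rewrite Rabs_Ropp in Htri.
    replace (g + - (g - u * v)) with (u * v) in Htri by ring.
    assert (eps * Rabs u <= eps * (eta * L)) by (apply Rmult_le_compat_l; lra). lra. }
  apply (Rmult_le_reg_r (eta * l)); [apply Rmult_lt_0_compat; lra|].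
  replace (eps * ((S + L) / l) * (eta * l)) with (eps * eta * (S + L)) by (field; lra).
  eapply Rle_trans; [| exact Huv]. rewrite Rmult_comm.
  apply Rmult_le_compat_r; [apply Rabs_pos | exact Hul].
Qed.

Lemma eq_0_of_forall_eps v Q : (forall eps, 0 < eps -> Rabs v <= eps * Q) -> v = 0.
Proof.
  intros H. destruct (Req_dec v 0) as [|Hv]; [assumption|]. exfalso.
  assert (Hp : 0 < Rabs v) by (apply Rabs_pos_lt; exact Hv).
  assert (HQ : 0 < Q) by (specialize (H 1 Rlt_0_1); lra).
  specialize (H (Rabs v / (2 * Q)) ltac:(apply Rdiv_lt_0_compat; lra)).
  replace (Rabs v / (2 * Q) * Q) with (Rabs v / 2) in H by (field; lra). lra.
Qed.

Lemma is_derive_comp_increment (F : R -> R -> R) (Z : R -> R) s dZ ft fx :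
  is_derive Z s dZ ->
  (forall eps : posreal, locally s (fun r =>
     Rabs (F r (Z r) - F s (Z s) - (r - s) * ft - (Z r - Z s) * fx)
       <= eps * (Rabs (r - s) + Rabs (Z r - Z s)))) ->
  is_derive (fun r => F r (Z r)) s (ft + fx * dZ).
Proof.
  intros HZ HF. apply is_derive_increment. intros eps.
  assert (HdZ := Rabs_pos dZ). assert (Hfx := Rabs_pos fx). assert (Heps := cond_pos eps).
  assert (He1 : 0 < eps / (2 * (Rabs dZ + 2))) by (apply Rdiv_lt_0_compat; lra).
  assert (He2 : 0 < eps / (2 * (Rabs fx + 1))) by (apply Rdiv_lt_0_compat; lra).
  assert (HZ1 := proj1 (is_derive_increment Z s dZ) HZ (mkposreal 1 Rlt_0_1)).
  assert (HZ2 := proj1 (is_derive_increment Z s dZ) HZ (mkposreal _ He2)).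
  eapply filter_imp;
    [| exact (filter_and _ _ (HF (mkposreal _ He1)) (filter_and _ _ HZ1 HZ2))].
  intros r [Hj [H1 H2]]. simpl in Hj, H1, H2.
  set (h := r - s) in *. set (k := Z r - Z s) in *. assert (Hh := Rabs_pos h).
  assert (Hk : Rabs k <= (Rabs dZ + 1) * Rabs h).
  { assert (Htri := Rabs_triang (k - h * dZ) (h * dZ)). rewrite Rabs_mult in Htri.
    replace (k - h * dZ + h * dZ) with k in Htri by ring. lra. }
  assert (Herr : eps / (2 * (Rabs dZ + 2)) * (Rabs h + Rabs k) <= eps / 2 * Rabs h).
  { apply Rle_trans with (eps / (2 * (Rabs dZ + 2)) * ((Rabs dZ + 2) * Rabs h)).
    - apply Rmult_le_compat_l; lra.
    - right. field. lra. }
  assert (Hlin : Rabs (fx * (k - h * dZ)) <= eps / 2 * Rabs h).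
  { rewrite Rabs_mult.
    apply Rle_trans with (Rabs fx * (eps / (2 * (Rabs fx + 1)) * Rabs h)).
    - apply Rmult_le_compat_l; assumption.
    - rewrite <- Rmult_assoc. apply Rmult_le_compat_r; [lra|].
      apply (Rmult_le_reg_r (2 * (Rabs fx + 1))); [lra|].
      replace (Rabs fx * (eps / (2 * (Rabs fx + 1))) * (2 * (Rabs fx + 1)))
        with (Rabs fx * eps) by (field; lra).
      nra. }
  replace (F r (Z r) - F s (Z s) - h * (ft + fx * dZ))
    with ((F r (Z r) - F s (Z s) - h * ft - k * fx) + fx * (k - h * dZ)) by ring.
  eapply Rle_trans; [apply Rabs_triang | lra].
Qed.

Lemma telescoping_abs_le (u : nat -> R) c N :
  (forall k, (k < N)%nat -> Rabs (u (S k) - u k) <= c) -> Rabs (u N - u O) <= INR N * c.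
Proof.
  induction N as [|N IH]; intros Hstep.
  - rewrite Rminus_diag, Rabs_R0; simpl; lra.
  - rewrite S_INR.
    replace (u (S N) - u O) with ((u (S N) - u N) + (u N - u O)) by ring.
    eapply Rle_trans; [apply Rabs_triang|].
    assert (H1 := Hstep N (Nat.lt_succ_diag_r N)).
    assert (H2 := IH (fun k Hk => Hstep k (Nat.lt_lt_succ_r _ _ Hk))). lra.
Qed.

Lemma interpolation_in w k N : 0 <= w -> (k <= N)%nat -> (0 < N)%nat ->
  0 <= INR k * (w / INR N) <= w.
Proof.
  intros Hw HkN HN.
  assert (HN' : 0 < INR N) by (apply lt_0_INR; exact HN).
  assert (Hk : 0 <= INR k <= INR N) by (split; [apply pos_INR | apply le_INR; exact HkN]).
  assert (Hq : 0 <= w / INR N) by (apply Rdiv_le_0_compat; lra).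
  split; [apply Rmult_le_pos; lra|].
  replace w with (INR N * (w / INR N)) at 2 by (field; lra).
  apply Rmult_le_compat_r; lra.
Qed.

Lemma continuous_2d_bounded (g : R -> R -> R) a b c d : a <= b -> c <= d ->
  (forall t x, a <= t <= b -> c <= x <= d -> continuity_2d_pt g t x) ->
  exists M, forall t x, a <= t <= b -> c <= x <= d -> Rabs (g t x) <= M.
Proof.
  intros Hab Hcd Hg.
  destruct (uniform_continuity_2d g a b c d Hg (mkposreal 1 Rlt_0_1)) as [delta Hdelta].
  set (span := b - a + (d - c) + 1).
  destruct (archimed_cor1 (delta / span)) as [N [HN HN0]].
  { apply Rdiv_lt_0_compat; [apply cond_pos | unfold span; lra]. }
  assert (HNpos : 0 < INR N) by (apply lt_0_INR; exact HN0).
  assert (Hsmall : forall w, 0 <= w <= b - a + (d - c) -> w / INR N < delta).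
  { intros w Hw. apply Rle_lt_trans with (span / INR N).
    - apply Rmult_le_compat_r; [left; apply Rinv_0_lt_compat; lra | unfold span; lra].
    - apply Rlt_le_trans with (span * (delta / span)).
      + apply Rmult_lt_compat_l; [unfold span; lra | exact HN].
      + right; field; unfold span; lra. }
  exists (Rabs (g a c) + INR N). intros t x Ht Hx.
  (* Walk from (a, c) to (t, x) in N steps, each shorter than the modulus of uniform
     continuity for the value 1. *)
  set (p k := a + INR k * ((t - a) / INR N)).
  set (q k := c + INR k * ((x - c) / INR N)).
  set (u k := g (p k) (q k)).
  assert (Hstep : forall k, (k < N)%nat -> Rabs (u (S k) - u k) <= 1).
  { intros k Hk. left. unfold u, p, q.
    pose proof (interpolation_in (t - a) k N ltac:(lra) ltac:(lia) HN0).
    pose proof (interpolation_in (t - a) (S k) N ltac:(lra) ltac:(lia) HN0).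
    pose proof (interpolation_in (x - c) k N ltac:(lra) ltac:(lia) HN0).
    pose proof (interpolation_in (x - c) (S k) N ltac:(lra) ltac:(lia) HN0).
    rewrite S_INR in *.
    apply Hdelta; try lra.
    - replace (a + (INR k + 1) * ((t - a) / INR N) - (a + INR k * ((t - a) / INR N)))
        with ((t - a) / INR N) by ring.
      rewrite Rabs_pos_eq by (apply Rdiv_le_0_compat; lra). apply Hsmall; lra.
    - replace (c + (INR k + 1) * ((x - c) / INR N) - (c + INR k * ((x - c) / INR N)))
        with ((x - c) / INR N) by ring.
      rewrite Rabs_pos_eq by (apply Rdiv_le_0_compat; lra). apply Hsmall; lra. }
  assert (Htel := telescoping_abs_le u 1 N Hstep).
  unfold u in Htel. rewrite Rmult_1_r in Htel.
  replace (p N) with t in Htel by (unfold p; field; lra).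
  replace (q N) with x in Htel by (unfold q; field; lra).
  replace (p O) with a in Htel by (unfold p; simpl; ring).
  replace (q O) with c in Htel by (unfold q; simpl; ring).
  pose proof (Rabs_triang (g t x - g a c) (g a c)).
  replace (g t x - g a c + g a c) with (g t x) in H by ring. lra.
Qed.

(** * Extension from the rectangle *)

(* Clamping extends a function continuous on the rectangle to one continuous on R^2, but
   not differentiable across the sides [x = -pi, pi]: the increment estimates below are
   only stated inside the rectangle. *)
Definition ext_rect (T : R) (f : R -> R -> R) (t x : R) : R :=
  f (clamp 0 T t) (clamp (- PI) PI x).

Lemma ext_rect_eq T f t x : 0 <= t <= T -> - PI <= x <= PI -> ext_rect T f t x = f t x.
Proof. intros Ht Hx. unfold ext_rect. rewrite !clamp_id; auto. Qed.

Lemma rect_clamp T t x : 0 <= T -> rect T (clamp 0 T t, clamp (- PI) PI x).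
Proof.
  intros HT. pose proof PI_RGT_0.
  split; simpl; apply clamp_in; lra.
Qed.

Lemma continuity_2d_pt_ext_rect T f : 0 <= T -> cont_on_rect T f ->
  forall t x, continuity_2d_pt (ext_rect T f) t x.
Proof.
  intros HT Hf t x eps.
  destruct (proj1 (filterlim_locally _ _) (Hf _ (rect_clamp T t x HT)) eps) as [d Hd].
  exists d. intros u v Hu Hv. apply (Hd (clamp 0 T u, clamp (- PI) PI v)).
  - split; apply (Rle_lt_trans _ _ _ (clamp_lipschitz _ _ _ _)); assumption.
  - apply rect_clamp; exact HT.
Qed.

Lemma ext_rect_bounded T f : 0 <= T -> cont_on_rect T f ->
  exists M, forall t x, Rabs (ext_rect T f t x) <= M.
Proof.
  intros HT Hf. pose proof PI_RGT_0.
  destruct (continuous_2d_bounded (ext_rect T f) 0 T (- PI) PI HT ltac:(lra)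
              (fun t x _ _ => continuity_2d_pt_ext_rect T f HT Hf t x)) as [M HM].
  exists M. intros t x. destruct (rect_clamp T t x HT) as [Ht Hx]; simpl in Ht, Hx.
  unfold ext_rect at 1. rewrite <- (ext_rect_eq T f _ _ Ht Hx). apply HM; assumption.
Qed.

Lemma uniform_continuity_rect (g : R -> R -> R) T : (forall t x, continuity_2d_pt g t x) ->
  forall eps, 0 < eps -> exists d, 0 < d /\ forall t x t' x',
    0 <= t <= T -> - PI <= x <= PI -> 0 <= t' <= T -> - PI <= x' <= PI ->
    Rabs (t' - t) < d -> Rabs (x' - x) < d -> Rabs (g t' x' - g t x) < eps.
Proof.
  intros Hg eps Heps.
  destruct (uniform_continuity_2d g 0 T (- PI) PI (fun t x _ _ => Hg t x) (mkposreal eps Heps))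
    as [d Hd].
  exists d; split; [apply cond_pos | intros; apply Hd; assumption].
Qed.

Definition char_speed (T : R) (a : R -> R -> R) (t y : R) : R :=
  RInt (fun x => ext_rect T a t x) (- PI) y.

(** * The equation along curves *)

Section Transport.

Variables (T : R) (a at_ ax : R -> R -> R).
Hypotheses (HT : 0 < T) (HC : C1_rect T a at_ ax).

Local Notation ea := (ext_rect T a).
Local Notation eat := (ext_rect T at_).
Local Notation eax := (ext_rect T ax).
Local Notation A := (char_speed T a).

Lemma ext_a_continuous t x : continuity_2d_pt ea t x.
Proof. apply continuity_2d_pt_ext_rect; [lra | apply HC]. Qed.

Lemma ext_at_continuous t x : continuity_2d_pt eat t x.
Proof. apply continuity_2d_pt_ext_rect; [lra | apply HC]. Qed.

Lemma ext_ax_continuous t x : continuity_2d_pt eax t x.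
Proof. apply continuity_2d_pt_ext_rect; [lra | apply HC]. Qed.

Lemma is_derive_ext_x t x : 0 < t < T -> - PI < x < PI ->
  is_derive (fun y => ea t y) x (eax t x).
Proof.
  intros Ht Hx. rewrite ext_rect_eq by lra.
  apply is_derive_ext_loc with (f := fun y => a t y); [| apply HC; assumption].
  apply (filter_imp (fun y => - PI < y < PI)); [| apply locally_open_interval, Hx].
  intros y Hy. rewrite ext_rect_eq by lra. reflexivity.
Qed.

Lemma is_derive_ext_t t x : 0 < t < T -> - PI < x < PI ->
  is_derive (fun s => ea s x) t (eat t x).
Proof.
  intros Ht Hx. rewrite ext_rect_eq by lra.
  apply is_derive_ext_loc with (f := fun s => a s x); [| apply HC; assumption].
  apply (filter_imp (fun s => 0 < s < T)); [| apply locally_open_interval, Ht].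
  intros s Hs. rewrite ext_rect_eq by lra. reflexivity.
Qed.

Lemma ext_increment_x eps : 0 < eps -> exists d, 0 < d /\ forall t y y',
  0 <= t <= T -> - PI <= y <= PI -> - PI <= y' <= PI -> Rabs (y' - y) < d ->
  Rabs (ea t y' - ea t y - (y' - y) * eax t y) <= eps * Rabs (y' - y).
Proof.
  intros Heps.
  destruct (uniform_continuity_rect eax T ext_ax_continuous eps Heps) as [d [Hd Hunif]].
  exists d; split; [exact Hd|]. intros t y y' Ht Hy Hy' Hyy.
  (* [a t] is differentiable only for [0 < t < T]; the end times follow by continuity. *)
  apply (le_closure_interval (fun s => Rabs (ea s y' - ea s y - (y' - y) * eax s y)) 0 T);
    [lra | exact Ht | |].
  - apply continuity_pt_comp with (f2 := Rabs); [| apply Rcontinuity_abs].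
    repeat (apply continuity_pt_minus || apply continuity_pt_mult
      || apply continuity_pt_slice_l || apply continuity_pt_const).
    all: first [apply ext_a_continuous | apply ext_ax_continuous | intros ? ?; reflexivity].
  - intros s Hs. destruct (Rmin_Rmax_in _ _ y y' Hy Hy') as [Hmin Hmax].
    apply (mvt_remainder_le (fun z => ea s z) (fun z => eax s z)).
    + intros c Hc. apply is_derive_ext_x; lra.
    + intros c _. apply continuity_pt_slice_r, ext_a_continuous.
    + intros c Hc. left. apply Hunif; try lra.
      * rewrite Rminus_diag, Rabs_R0; exact Hd.
      * apply (Rle_lt_trans _ _ _ (Rabs_between_le _ _ _ Hc) Hyy).
Qed.

Lemma ext_increment_t eps : 0 < eps -> exists d, 0 < d /\ forall t t' y,
  0 <= t <= T -> 0 <= t' <= T -> - PI <= y <= PI -> Rabs (t' - t) < d ->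
  Rabs (ea t' y - ea t y - (t' - t) * eat t y) <= eps * Rabs (t' - t).
Proof.
  intros Heps. pose proof PI_RGT_0.
  destruct (uniform_continuity_rect eat T ext_at_continuous eps Heps) as [d [Hd Hunif]].
  exists d; split; [exact Hd|]. intros t t' y Ht Ht' Hy Htt.
  apply (le_closure_interval (fun z => Rabs (ea t' z - ea t z - (t' - t) * eat t z)) (- PI) PI);
    [lra | exact Hy | |].
  - apply continuity_pt_comp with (f2 := Rabs); [| apply Rcontinuity_abs].
    repeat (apply continuity_pt_minus || apply continuity_pt_mult
      || apply continuity_pt_slice_r || apply continuity_pt_const).
    all: first [apply ext_a_continuous | apply ext_at_continuous | intros ? ?; reflexivity].
  - intros z Hz. destruct (Rmin_Rmax_in _ _ t t' Ht Ht') as [Hmin Hmax].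
    apply (mvt_remainder_le (fun s => ea s z) (fun s => eat s z)).
    + intros c Hc. apply is_derive_ext_t; lra.
    + intros c _. apply continuity_pt_slice_l, ext_a_continuous.
    + intros c Hc. left. apply Hunif; try lra.
      * apply (Rle_lt_trans _ _ _ (Rabs_between_le _ _ _ Hc) Htt).
      * rewrite Rminus_diag, Rabs_R0; exact Hd.
Qed.

Lemma ext_increment eps : 0 < eps -> exists d, 0 < d /\ forall t t' y y',
  0 <= t <= T -> 0 <= t' <= T -> - PI <= y <= PI -> - PI <= y' <= PI ->
  Rabs (t' - t) < d -> Rabs (y' - y) < d ->
  Rabs (ea t' y' - ea t y - (t' - t) * eat t y - (y' - y) * eax t y)
    <= eps * (Rabs (t' - t) + Rabs (y' - y)).
Proof.
  intros Heps. assert (Heps2 : 0 < eps / 2) by lra.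
  destruct (ext_increment_x _ Heps2) as [d1 [Hd1 Hx]].
  destruct (ext_increment_t _ Heps2) as [d2 [Hd2 Ht]].
  destruct (uniform_continuity_rect eax T ext_ax_continuous _ Heps2) as [d3 [Hd3 Hunif]].
  exists (Rmin d1 (Rmin d2 d3)). split; [repeat apply Rmin_pos; assumption|].
  intros t t' y y' Htt Htt' Hy Hy' Hdt Hdy.
  pose proof (Rmin_l d1 (Rmin d2 d3)). pose proof (Rmin_r d1 (Rmin d2 d3)).
  pose proof (Rmin_l d2 d3). pose proof (Rmin_r d2 d3).
  assert (Hx' := Hx t' y y' Htt' Hy Hy' ltac:(lra)).
  assert (Ht' := Ht t t' y Htt Htt' Hy ltac:(lra)).
  assert (Hax : Rabs ((eax t' y - eax t y) * (y' - y)) <= eps / 2 * Rabs (y' - y)).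
  { rewrite Rabs_mult. apply Rmult_le_compat_r; [apply Rabs_pos|]. left.
    apply Hunif; try lra. rewrite Rminus_diag, Rabs_R0; lra. }
  replace (ea t' y' - ea t y - (t' - t) * eat t y - (y' - y) * eax t y)
    with ((ea t' y' - ea t' y - (y' - y) * eax t' y) + (eax t' y - eax t y) * (y' - y)
          + (ea t' y - ea t y - (t' - t) * eat t y)) by ring.
  pose proof (Rabs_triang ((ea t' y' - ea t' y - (y' - y) * eax t' y)
                             + (eax t' y - eax t y) * (y' - y))
                          (ea t' y - ea t y - (t' - t) * eat t y)).
  pose proof (Rabs_triang (ea t' y' - ea t' y - (y' - y) * eax t' y)
                          ((eax t' y - eax t y) * (y' - y))).
  assert (0 <= eps * Rabs (t' - t)) by (apply Rmult_le_pos; [lra | apply Rabs_pos]). lra.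
Qed.

Lemma is_derive_ext_comp (Z : R -> R) s dZ : 0 < s < T -> is_derive Z s dZ ->
  (forall r, 0 < r < T -> - PI <= Z r <= PI) ->
  is_derive (fun r => ea r (Z r)) s (eat s (Z s) + eax s (Z s) * dZ).
Proof.
  intros Hs HZ HZr. apply is_derive_comp_increment; [exact HZ|]. intros eps.
  destruct (ext_increment eps (cond_pos eps)) as [d [Hd Hjoint]].
  assert (HZc := proj1 (continuity_pt_locally Z s) (continuity_pt_of_is_derive _ _ _ HZ)
                   (mkposreal d Hd)).
  assert (Hnear : locally s (fun r => 0 < r < T /\ Rabs (r - s) < d)).
  { apply filter_and; [apply locally_open_interval, Hs | exists (mkposreal d Hd); auto]. }
  eapply filter_imp; [| exact (filter_and _ _ HZc Hnear)].
  intros r [HZrs [Hr Hrs]].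
  exact (Hjoint s r (Z s) (Z r) ltac:(lra) ltac:(lra) (HZr s Hs) (HZr r Hr) Hrs HZrs).
Qed.

Hypothesis HPDE : forall t x, 0 <= t <= T -> - PI <= x <= PI ->
  at_ t x + RInt (fun y => a t y) (- PI) x * ax t x - (a t x) ^ 2
    + / PI * RInt (fun y => (a t y) ^ 2) (- PI) PI = 0.
Hypothesis Hmean : forall t, 0 <= t <= T -> RInt (fun y => a t y) (- PI) PI = 0.
Variable K : R.
Hypothesis HK : forall t x, Rabs (ea t x) <= K.

Lemma ex_RInt_ext t u v : ex_RInt (fun x => ea t x) u v.
Proof.
  apply (@ex_RInt_continuous R_CompleteNormedModule). intros z _.
  apply continuity_pt_filterlim, continuity_pt_slice_r, ext_a_continuous.
Qed.

Lemma RInt_eq_char_speed t y : 0 <= t <= T -> - PI <= y <= PI ->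
  RInt (fun x => a t x) (- PI) y = A t y.
Proof.
  intros Ht Hy. apply RInt_ext. intros x Hx.
  rewrite Rmin_left in Hx by lra. rewrite Rmax_right in Hx by lra.
  rewrite ext_rect_eq by lra. reflexivity.
Qed.

Lemma char_speed_remainder t y y' :
  A t y' - A t y - (y' - y) * ea t y = RInt (fun z => ea t z - ea t y) y y'.
Proof.
  unfold char_speed.
  rewrite <- (RInt_Chasles (fun x => ea t x) (- PI) y y') by apply ex_RInt_ext.
  rewrite (RInt_minus (fun z => ea t z) (fun _ => ea t y));
    [| apply ex_RInt_ext | apply ex_RInt_const].
  rewrite RInt_const.
  change (RInt (fun x => ea t x) (- PI) y + RInt (fun x => ea t x) y y'
          - RInt (fun x => ea t x) (- PI) y - (y' - y) * ea t y
          = RInt (fun x => ea t x) y y' - (y' - y) * ea t y).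
  ring.
Qed.

Lemma char_speed_increment eps : 0 < eps -> exists d, 0 < d /\ forall t y y',
  0 <= t <= T -> - PI <= y <= PI -> - PI <= y' <= PI -> Rabs (y' - y) < d ->
  Rabs (A t y' - A t y - (y' - y) * ea t y) <= eps * Rabs (y' - y).
Proof.
  intros Heps.
  destruct (uniform_continuity_rect ea T ext_a_continuous eps Heps)
    as [d [Hd Hunif]].
  exists d; split; [exact Hd|]. intros t y y' Ht Hy Hy' Hyy.
  rewrite char_speed_remainder, Rmult_comm.
  apply abs_RInt_le_const_abs.
  - apply (@ex_RInt_minus R_CompleteNormedModule); [apply ex_RInt_ext | apply ex_RInt_const].
  - intros z Hz. destruct (Rmin_Rmax_in _ _ y y' Hy Hy'). left.
    apply Hunif; try lra.
    + rewrite Rminus_diag, Rabs_R0; exact Hd.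
    + apply (Rle_lt_trans _ _ _ (Rabs_between_le _ _ _ Hz) Hyy).
Qed.

Lemma char_speed_bound_left t y : - PI <= y -> Rabs (A t y) <= K * (y + PI).
Proof.
  intros Hy. unfold char_speed.
  eapply Rle_trans; [apply abs_RInt_le_const_abs with (M := K); [apply ex_RInt_ext | auto]|].
  rewrite Rabs_pos_eq by lra. right; ring.
Qed.

Lemma char_speed_bound_right t y : 0 <= t <= T -> y <= PI -> Rabs (A t y) <= K * (PI - y).
Proof.
  intros Ht Hy.
  assert (H0 : A t PI = 0).
  { pose proof PI_RGT_0. rewrite <- RInt_eq_char_speed by lra. apply Hmean, Ht. }
  unfold char_speed in H0 |- *.
  rewrite <- (RInt_Chasles (fun x => ea t x) (- PI) y PI) in H0 by apply ex_RInt_ext.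
  change (RInt (fun x => ea t x) (- PI) y + RInt (fun x => ea t x) y PI = 0) in H0.
  replace (RInt (fun x => ea t x) (- PI) y) with (- RInt (fun x => ea t x) y PI) by lra.
  rewrite Rabs_Ropp.
  eapply Rle_trans; [apply abs_RInt_le_const_abs with (M := K); [apply ex_RInt_ext | auto]|].
  rewrite Rabs_pos_eq by lra. right; ring.
Qed.

Lemma is_derive_ext_along (Z : R -> R) s dZ : 0 < s < T -> is_derive Z s dZ ->
  (forall r, 0 < r < T -> - PI <= Z r <= PI) ->
  is_derive (fun r => ea r (Z r)) s
    (ea s (Z s) ^ 2 - / PI * RInt (fun y => (a s y) ^ 2) (- PI) PI
       + eax s (Z s) * (dZ - A s (Z s))).
Proof.
  intros Hs HZ HZr.
  assert (Hd := is_derive_ext_comp Z s dZ Hs HZ HZr).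
  destruct (HZr s Hs) as [HZl HZu].
  assert (HPDEs := HPDE s (Z s) ltac:(lra) (conj HZl HZu)).
  rewrite RInt_eq_char_speed in HPDEs by lra.
  rewrite <- (ext_rect_eq T at_ s (Z s)), <- (ext_rect_eq T ax s (Z s)),
    <- (ext_rect_eq T a s (Z s)) in HPDEs by lra.
  replace (ea s (Z s) ^ 2 - / PI * RInt (fun y => (a s y) ^ 2) (- PI) PI
             + eax s (Z s) * (dZ - A s (Z s)))
    with (eat s (Z s) + eax s (Z s) * dZ) by lra.
  exact Hd.
Qed.

Variables (M : R) (X : R -> R).
Hypothesis HM : forall t x, Rabs (eax t x) <= M.
Hypotheses (HXc : forall s, continuity_pt X s) (HXr : forall s, - PI <= X s <= PI).
Hypothesis HXd : forall r, 0 < r < T -> is_derive X r (A r (X r)).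

Lemma K_nonneg : 0 <= K.
Proof. exact (Rle_trans _ _ _ (Rabs_pos _) (HK 0 0)). Qed.

Lemma exp_neg_KT_le s : 0 <= s <= T -> exp (- (K * T)) <= exp (- (K * s)).
Proof. intros Hs. apply exp_le_compat. pose proof K_nonneg. nra. Qed.

Lemma char_dist_right s : 0 <= s <= T -> (PI - X 0) * exp (- (K * T)) <= PI - X s.
Proof.
  intros Hs. pose proof (HXr 0).
  eapply Rle_trans; [apply Rmult_le_compat_l; [lra | apply exp_neg_KT_le, Hs]|].
  apply (exp_lower_bound_of_derive (fun r => PI - X r) (fun r => - A r (X r))); [lra | | |].
  - intros r Hr.
    assert (Hd := @is_derive_minus R_AbsRing R_NormedModule (fun _ => PI) X r 0 _
                   (is_derive_const PI r) (HXd r ltac:(lra))).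
    change (is_derive (fun r => PI - X r) r (0 - A r (X r))) in Hd.
    rewrite Rminus_0_l in Hd. exact Hd.
  - intros r _. apply continuity_pt_minus; [| apply HXc].
    apply continuity_pt_const. intros ? ?; reflexivity.
  - intros r Hr.
    assert (HB := char_speed_bound_right r (X r) ltac:(lra) (proj2 (HXr r))).
    apply Rabs_le_between in HB. lra.
Qed.

Lemma char_dist_left s : 0 <= s <= T -> (X 0 + PI) * exp (- (K * T)) <= X s + PI.
Proof.
  intros Hs. pose proof (HXr 0).
  eapply Rle_trans; [apply Rmult_le_compat_l; [lra | apply exp_neg_KT_le, Hs]|].
  apply (exp_lower_bound_of_derive (fun r => X r + PI) (fun r => A r (X r))); [lra | | |].
  - intros r Hr.
    assert (Hd := @is_derive_plus R_AbsRing R_NormedModule X (fun _ => PI) r _ 0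
                   (HXd r ltac:(lra)) (is_derive_const PI r)).
    change (is_derive (fun r => X r + PI) r (A r (X r) + 0)) in Hd.
    rewrite Rplus_0_r in Hd. exact Hd.
  - intros r _. apply continuity_pt_plus; [apply HXc |].
    apply continuity_pt_const. intros ? ?; reflexivity.
  - intros r Hr.
    assert (HB := char_speed_bound_left r (X r) (proj1 (HXr r))).
    apply Rabs_le_between in HB. lra.
Qed.

Lemma char_margin : exists sg m, (sg = 1 \/ sg = -1) /\ 0 < m /\
  forall s u, 0 <= s <= T -> 0 <= u <= m -> - PI <= X s + sg * u <= PI.
Proof.
  pose proof (HXr 0). pose proof PI_RGT_0.
  destruct (Rlt_le_dec (X 0) PI) as [Hlt | Hge].
  - exists 1, ((PI - X 0) * exp (- (K * T))). split; [left; reflexivity|].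
    split; [apply Rmult_lt_0_compat; [lra | apply exp_pos]|].
    intros s u Hs Hu. pose proof (char_dist_right s Hs). pose proof (HXr s). lra.
  - exists (-1), ((X 0 + PI) * exp (- (K * T))). split; [right; reflexivity|].
    split; [apply Rmult_lt_0_compat; [lra | apply exp_pos]|].
    intros s u Hs Hu. pose proof (char_dist_left s Hs). pose proof (HXr s). lra.
Qed.

(** * Approximate characteristics *)

(* [X + h * weight] is an approximate characteristic: [(h * weight)' = a(t, X) (h * weight)]
   is the linearisation of [A(t, X + h * weight) - A(t, X)]. *)
Definition weight (s : R) : R := exp (RInt (fun r => ea r (X r)) 0 s).

Lemma continuity_pt_ext_char r : continuity_pt (fun r => ea r (X r)) r.
Proof.
  apply (continuity_pt_comp_2d ea id X); [apply ext_a_continuous |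
    apply continuity_pt_id | apply HXc].
Qed.

Lemma is_derive_weight r : is_derive weight r (ea r (X r) * weight r).
Proof.
  unfold weight.
  apply (is_derive_comp exp (fun s => RInt (fun r => ea r (X r)) 0 s)); [apply is_derive_exp|].
  apply (is_derive_RInt (fun r => ea r (X r)) _ 0).
  - apply filter_forall. intros b. apply (@RInt_correct R_CompleteNormedModule).
    apply (@ex_RInt_continuous R_CompleteNormedModule). intros z _.
    apply continuity_pt_filterlim, continuity_pt_ext_char.
  - apply continuity_pt_filterlim, continuity_pt_ext_char.
Qed.

Lemma weight_0 : weight 0 = 1.
Proof. unfold weight. rewrite RInt_point. apply exp_0. Qed.

Lemma weight_bounds r : 0 <= r <= T -> exp (- (K * T)) <= weight r <= exp (K * T).
Proof.
  intros Hr. pose proof K_nonneg.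
  assert (HI : Rabs (RInt (fun r => ea r (X r)) 0 r) <= K * T).
  { eapply Rle_trans; [apply abs_RInt_le_const_abs with (M := K)|].
    - apply (@ex_RInt_continuous R_CompleteNormedModule). intros z _.
      apply continuity_pt_filterlim, continuity_pt_ext_char.
    - intros z _. apply HK.
    - rewrite Rminus_0_r, Rabs_pos_eq by lra. nra. }
  apply Rabs_le_between in HI. unfold weight. split; apply exp_le_compat; lra.
Qed.

Definition gap (h r : R) : R := ea r (X r + h * weight r) - ea r (X r).

(* [gronwall_sq] with [B = 2 K] and [D = M eps |h| exp (K T)] gives [(eps |h|)^2] times this. *)
Definition gronwall_const : R := (1 + T * (M * exp (K * T)) ^ 2) * exp ((4 * K + 1) * T).

Lemma is_derive_gap h r : 0 < r < T ->
  (forall r, 0 < r < T -> - PI <= X r + h * weight r <= PI) ->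
  is_derive (gap h) r
    ((ea r (X r + h * weight r) + ea r (X r)) * gap h r
     + eax r (X r + h * weight r)
       * (A r (X r) + h * (ea r (X r) * weight r) - A r (X r + h * weight r))).
Proof.
  intros Hr HY.
  assert (HdY : is_derive (fun s => X s + h * weight s) r
                  (A r (X r) + h * (ea r (X r) * weight r))).
  { apply (@is_derive_plus R_AbsRing R_NormedModule); [apply HXd, Hr|].
    apply (is_derive_scal weight), is_derive_weight. }
  assert (H1 := is_derive_ext_along _ r _ Hr HdY HY).
  assert (H2 := is_derive_ext_along X r _ Hr (HXd r Hr) (fun s _ => HXr s)).
  assert (H := @is_derive_minus R_AbsRing R_NormedModule _ _ r _ _ H1 H2).
  unfold gap. cbv beta in H.
  match type of H with is_derive _ _ ?l => replace l with
    ((ea r (X r + h * weight r) + ea r (X r)) * (ea r (X r + h * weight r) - ea r (X r))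
     + eax r (X r + h * weight r)
       * (A r (X r) + h * (ea r (X r) * weight r) - A r (X r + h * weight r))) in H end.
  - exact H.
  - change (minus ?u ?v) with (u - v). rewrite Rminus_diag, Rmult_0_r. ring.
Qed.

Lemma gronwall_rhs_le g0 c t : 0 <= t <= T -> Rabs g0 <= c ->
  (g0 ^ 2 + (M * (c * exp (K * T))) ^ 2 * t) * exp ((2 * (2 * K) + 1) * t)
    <= c ^ 2 * gronwall_const.
Proof.
  intros Ht Hg0. pose proof K_nonneg.
  assert (Hsq : g0 ^ 2 <= c ^ 2).
  { rewrite <- (pow2_abs g0). apply pow_incr. split; [apply Rabs_pos | exact Hg0]. }
  assert (HD : 0 <= c ^ 2 * (M * exp (K * T)) ^ 2) by (apply Rmult_le_pos; apply pow2_ge_0).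
  assert (HDt : c ^ 2 * (M * exp (K * T)) ^ 2 * t <= c ^ 2 * (M * exp (K * T)) ^ 2 * T)
    by (apply Rmult_le_compat_l; lra).
  unfold gronwall_const.
  replace (c ^ 2 * ((1 + T * (M * exp (K * T)) ^ 2) * exp ((4 * K + 1) * T)))
    with (c ^ 2 * (1 + T * (M * exp (K * T)) ^ 2) * exp ((4 * K + 1) * T)) by ring.
  replace ((M * (c * exp (K * T))) ^ 2) with (c ^ 2 * (M * exp (K * T)) ^ 2) by ring.
  apply Rmult_le_compat; [| left; apply exp_pos | | apply exp_le_compat; nra].
  - apply Rplus_le_le_0_compat; [apply pow2_ge_0 | apply Rmult_le_pos; lra].
  - lra.
Qed.

Lemma gap_le_gronwall h eps t : 0 <= t <= T ->
  (forall r, 0 <= r <= T -> - PI <= X r + h * weight r <= PI) ->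
  (forall r, 0 < r < T -> Rabs (A r (X r) + h * (ea r (X r) * weight r)
                                - A r (X r + h * weight r)) <= eps * Rabs h * exp (K * T)) ->
  Rabs (gap h 0) <= eps * Rabs h ->
  Rabs (gap h t) <= eps * Rabs h * sqrt gronwall_const.
Proof.
  intros Ht HY Hdefect H0. pose proof K_nonneg.
  assert (Hpos : 0 <= eps * Rabs h) by (pose proof (Rabs_pos (gap h 0)); lra).
  apply abs_le_sqrt_of_sqr_le; [exact Hpos|].
  eapply Rle_trans; [| apply (gronwall_rhs_le (gap h 0) _ t Ht H0)].
  apply (gronwall_sq (gap h) (fun r => ea r (X r + h * weight r) + ea r (X r))
    (fun r => eax r (X r + h * weight r)
              * (A r (X r) + h * (ea r (X r) * weight r) - A r (X r + h * weight r))));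
    [lra | lra | | | |].
  - intros r Hr. apply is_derive_gap; [lra | intros; apply HY; lra].
  - intros r _. apply continuity_pt_minus; apply (continuity_pt_comp_2d ea id);
      try apply ext_a_continuous; try apply continuity_pt_id; try apply HXc.
    apply continuity_pt_plus; [apply HXc | apply continuity_pt_scal].
    exact (continuity_pt_of_is_derive _ _ _ (is_derive_weight r)).
  - intros r Hr. eapply Rle_trans; [apply Rabs_triang|].
    pose proof (HK r (X r + h * weight r)). pose proof (HK r (X r)). lra.
  - intros r Hr. rewrite Rabs_mult. apply Rmult_le_compat; try apply Rabs_pos; [apply HM|].
    apply Hdefect; lra.
Qed.

Lemma abs_scal_weight_bounds h r : 0 <= r <= T ->
  Rabs h * exp (- (K * T)) <= Rabs (h * weight r) <= Rabs h * exp (K * T).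
Proof.
  intros Hr. destruct (weight_bounds r Hr). pose proof (exp_pos (- (K * T))).
  rewrite Rabs_mult, (Rabs_pos_eq (weight r)) by lra.
  split; apply Rmult_le_compat_l; try apply Rabs_pos; assumption.
Qed.

Lemma approx_char_choice rho : 0 < rho -> exists h, 0 < Rabs h /\
  Rabs h * exp (K * T) < rho /\
  forall r, 0 <= r <= T -> - PI <= X r + h * weight r <= PI.
Proof.
  intros Hrho. pose proof K_nonneg.
  destruct char_margin as [sg [m [Hsg [Hm Hstrip]]]].
  assert (HeKT : 1 <= exp (K * T)) by (rewrite <- exp_0; apply exp_le_compat; nra).
  pose proof (Rmin_l rho m). pose proof (Rmin_r rho m).
  assert (Hmin : 0 < Rmin rho m) by (apply Rmin_pos; assumption).
  set (eta := Rmin rho m / (2 * exp (K * T))).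
  assert (HetaJ : eta * exp (K * T) = Rmin rho m / 2) by (unfold eta; field; lra).
  assert (Heta : 0 < eta) by (apply Rdiv_lt_0_compat; lra).
  assert (Hh : Rabs (sg * eta) = eta).
  { destruct Hsg as [-> | ->]; [rewrite Rmult_1_l, Rabs_pos_eq | rewrite Rabs_left]; lra. }
  exists (sg * eta). rewrite Hh. split; [exact Heta | split; [lra|]].
  intros r Hr. destruct (weight_bounds r Hr). pose proof (exp_pos (- (K * T))).
  replace (sg * eta * weight r) with (sg * (eta * weight r)) by ring.
  apply Hstrip; [exact Hr | split; nra].
Qed.

Lemma ax_char_le_eps eps t : 0 < eps -> 0 <= t <= T -> eax 0 (X 0) = 0 ->
  Rabs (eax t (X t)) <= eps * ((sqrt gronwall_const + exp (K * T)) / exp (- (K * T))).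
Proof.
  intros Heps Ht Hax0.
  destruct (ext_increment_x eps Heps) as [dF [HdF Hincx]].
  destruct (char_speed_increment eps Heps) as [dA [HdA Hincs]].
  destruct (approx_char_choice _ (Rmin_pos _ _ HdF HdA)) as [h [Hh [Hhr HY]]].
  pose proof (Rmin_l dF dA). pose proof (Rmin_r dF dA).
  assert (Hsep : forall r, 0 <= r <= T -> Rabs (X r + h * weight r - X r) < Rmin dF dA).
  { intros r Hr. destruct (abs_scal_weight_bounds h r Hr).
    replace (X r + h * weight r - X r) with (h * weight r) by ring. lra. }
  apply (abs_le_of_linear_approx (gap h t) (h * weight t) _ eps (Rabs h));
    [exact Hh | apply exp_pos | lra | apply abs_scal_weight_bounds, Ht | |].
  - assert (Hfin := Hincx t (X t) (X t + h * weight t) Ht (HXr t) (HY t Ht)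
                      ltac:(pose proof (Hsep t Ht); lra)).
    replace (X t + h * weight t - X t) with (h * weight t) in Hfin by ring. exact Hfin.
  - apply gap_le_gronwall; [exact Ht | exact HY | |].
    + intros r Hr. assert (Hr' : 0 <= r <= T) by lra.
      assert (Hd := Hincs r (X r) (X r + h * weight r) Hr' (HXr r) (HY r Hr')
                      ltac:(pose proof (Hsep r Hr'); lra)).
      replace (X r + h * weight r - X r) with (h * weight r) in Hd by ring.
      replace (A r (X r) + h * (ea r (X r) * weight r) - A r (X r + h * weight r))
        with (- (A r (X r + h * weight r) - A r (X r) - h * weight r * ea r (X r))) by ring.
      rewrite Rabs_Ropp. eapply Rle_trans; [exact Hd|]. rewrite Rmult_assoc.
      apply Rmult_le_compat_l; [lra | apply abs_scal_weight_bounds, Hr'].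
    + unfold gap. rewrite weight_0, Rmult_1_r.
      assert (HY0 := HY 0 ltac:(lra)). rewrite weight_0, Rmult_1_r in HY0.
      assert (HeKT : 1 <= exp (K * T)) by (rewrite <- exp_0; apply exp_le_compat;
        pose proof K_nonneg; nra).
      assert (Hh0 := Hincx 0 (X 0) (X 0 + h) ltac:(lra) (HXr 0) HY0).
      replace (X 0 + h - X 0) with h in Hh0 by ring.
      rewrite Hax0, Rmult_0_r, Rminus_0_r in Hh0. apply Hh0. nra.
Qed.

Lemma ax_char_zero t : 0 <= t <= T -> eax 0 (X 0) = 0 -> eax t (X t) = 0.
Proof.
  intros Ht Hax0.
  exact (eq_0_of_forall_eps _ _ (fun eps Heps => ax_char_le_eps eps t Heps Ht Hax0)).
Qed.

End Transport.

Lemma characteristic_clamp T a x0 xs : 0 < T -> characteristic T a x0 xs ->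
  (forall s, continuity_pt (fun r => xs (clamp 0 T r)) s) /\
  (forall s, - PI <= xs (clamp 0 T s) <= PI) /\
  (forall r, 0 < r < T ->
     is_derive (fun s => xs (clamp 0 T s)) r (char_speed T a r (xs (clamp 0 T r)))).
Proof.
  intros HT [_ [Hrange [Hcont Hderiv]]]. split; [|split].
  - intros s. apply continuity_pt_clamp_comp; [lra | exact Hcont].
  - intros s. apply Hrange, clamp_in; lra.
  - intros r Hr. rewrite clamp_id, <- RInt_eq_char_speed by (try apply Hrange; lra).
    apply is_derive_ext_loc with (f := xs); [| apply Hderiv, Hr].
    apply (filter_imp (fun s => 0 < s < T)); [| apply locally_open_interval, Hr].
    intros s Hs. rewrite clamp_id by lra. reflexivity.
Qed.

Theorem lemma2p4 (T : R) (a at_ ax : R -> R -> R) (x0 : R) (xs : R -> R) :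
  C1_rect T a at_ ax ->
  (forall t x, 0 <= t <= T -> - PI <= x <= PI ->
     at_ t x + RInt (fun y => a t y) (- PI) x * ax t x - (a t x) ^ 2
       + / PI * RInt (fun y => (a t y) ^ 2) (- PI) PI = 0) ->
  (forall t, 0 <= t <= T -> RInt (fun y => a t y) (- PI) PI = 0) ->
  - PI <= x0 <= PI ->
  ax 0 x0 = 0 ->
  characteristic T a x0 xs ->
  forall t, 0 <= t <= T -> ax t (xs t) = 0.
Proof.
  intros HC HPDE Hmean Hx0 Hax0 Hchar t Ht.
  destruct (Rle_lt_dec T 0) as [HT0 | HT].
  { replace t with 0 by lra. destruct Hchar as [-> _]. exact Hax0. }
  destruct (ext_rect_bounded T a ltac:(lra) (proj1 (proj2 HC))) as [K HK].
  destruct (ext_rect_bounded T ax ltac:(lra) (proj2 (proj2 (proj2 HC)))) as [M HM].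
  destruct (characteristic_clamp T a x0 xs HT Hchar) as [HXc [HXr HXd]].
  assert (HX : forall s, 0 <= s <= T -> xs (clamp 0 T s) = xs s)
    by (intros s Hs; rewrite clamp_id; auto).
  rewrite <- HX, <- (ext_rect_eq T ax t) by (try apply HXr; lra).
  apply (ax_char_zero T a at_ ax HT HC HPDE Hmean K HK M _ HM HXc HXr HXd t Ht).
  destruct Hchar as [Hxs0 _]. rewrite HX, Hxs0, ext_rect_eq by lra. exact Hax0.
Qed.
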